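(* Let $V=\{0,\tfrac12,1\}$ and consider any sentential language with an atomic expressive semantics whose consequence relation is induced by the truth-relation $ss\cap tt$. Then no unary connective of the language (with any truth function) is a G-negation.
   Context: $ss\cap tt=\models_{\{1\},\{1\}}\cap\models_{\{1,\frac12\},\{1,\frac12\}}$, where $\gamma\models_{\mathcal{D}_p,\mathcal{D}_c}\delta$ iff ($\gamma\subseteq\mathcal{D}_p\Rightarrow\delta\cap\mathcal{D}_c\neq\emptyset$). A semantics: set of valuations mapping atoms to $V$, interpreting each connective by a truth function fixed across valuations, extended compositionally, such that every assignment of values to finitely many distinct atoms is realized. Atomic expressive: for every $\gamma\subseteq V$ there are a set of formulas $\Gamma$ and a valuation $v$ with $v(\Gamma)=\gamma$. Consequence: $\Gamma\vdash\Delta$ iff $v(\Gamma)\models v(\Delta)$ for all $v$; $\Gamma,A$ denotes $\Gamma\cup\{A\}$. A G-negation $\neg$ satisfies for all $\Gamma,\Delta,A$: $\Gamma,\neg A\vdash\Delta$ iff $\Gamma\vdash A,\Delta$; and $\Gamma\vdash\neg A,\Delta$ iff $\Gamma,A\vdash\Delta$. *)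

From Stdlib Require Import List Fin.
Set Implicit Arguments.

Inductive V3 : Type := v0 | vh | v1.

Definition vset := V3 -> Prop.

Definition models (Dp Dc : vset) (g d : vset) : Prop :=
  (forall x, g x -> Dp x) -> exists y, d y /\ Dc y.

Definition D1 : vset := fun x => x = v1.
Definition D2 : vset := fun x => x = v1 \/ x = vh.

Definition ss : vset -> vset -> Prop := models D1 D1.
Definition tt : vset -> vset -> Prop := models D2 D2.

Definition sstt (g d : vset) : Prop := ss g d /\ tt g d.

Inductive form (Atom : Type) (Conn : nat -> Type) : Type :=
| Var : Atom -> form Atom Conn
| App : forall n, Conn n -> (Fin.t n -> form Atom Conn) -> form Atom Conn.

Arguments Var {Atom Conn} _.
Arguments App {Atom Conn n} _ _.

Definition truth_funs (Conn : nat -> Type) := forall n, Conn n -> (Fin.t n -> V3) -> V3.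

Fixpoint eval (Atom : Type) (Conn : nat -> Type) (I : truth_funs Conn)
  (v : Atom -> V3) (A : form Atom Conn) : V3 :=
  match A with
  | Var p => v p
  | @App _ _ n c args => I n c (fun i => eval I v (args i))
  end.

(* A semantics: a set S of valuations (given by their atomic parts, extended
   compositionally with the fixed truth functions I) such that every
   assignment of values to finitely many distinct atoms is realized. *)
Definition is_semantics (Atom : Type) (S : (Atom -> V3) -> Prop) : Prop :=
  forall (l : list Atom) (f : Atom -> V3),
    exists v, S v /\ forall p, In p l -> v p = f p.

Definition img (Atom : Type) (Conn : nat -> Type) (I : truth_funs Conn)
  (v : Atom -> V3) (G : form Atom Conn -> Prop) : vset :=
  fun x => exists A, G A /\ eval I v A = x.

Definition atomic_expressive (Atom : Type) (Conn : nat -> Type)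
  (I : truth_funs Conn) (S : (Atom -> V3) -> Prop) : Prop :=
  forall g : vset, exists (G : form Atom Conn -> Prop) (v : Atom -> V3),
    S v /\ forall x, img I v G x <-> g x.

Definition cons (Atom : Type) (Conn : nat -> Type) (I : truth_funs Conn)
  (S : (Atom -> V3) -> Prop) (G D : form Atom Conn -> Prop) : Prop :=
  forall v, S v -> sstt (img I v G) (img I v D).

Definition addf (T : Type) (G : T -> Prop) (A : T) : T -> Prop :=
  fun B => G B \/ B = A.

Definition is_Gneg (Atom : Type) (Conn : nat -> Type) (I : truth_funs Conn)
  (S : (Atom -> V3) -> Prop) (neg : form Atom Conn -> form Atom Conn) : Prop :=
  forall (G D : form Atom Conn -> Prop) (A : form Atom Conn),
    (cons I S (addf G (neg A)) D <-> cons I S G (addf D A)) /\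
    (cons I S G (addf D (neg A)) <-> cons I S (addf G A) D).

Definition app1 (Atom : Type) (Conn : nat -> Type) (c : Conn 1)
  (A : form Atom Conn) : form Atom Conn := App c (fun _ => A).


(* Atomic expressiveness yields a formula A and an admissible valuation v with
   v(A) = 1/2.
   Identity and the left rule give |- ~A, A, which under ss forces v(~A) = 1.
   Identity and the right rule give A, ~A |-, which under tt demands that some
   premise take the value 0, yet v(A) = 1/2 and v(~A) = 1 both lie in {1/2, 1}. *)

Lemma ss_no_premises {g d : vset} : (forall x, ~ g x) -> ss g d -> d v1.
Proof.
  intros Hg H. destruct H as [y [Hd Hy]]; [intros x Hx; contradiction (Hg x)|].
  unfold D1 in Hy; subst y; exact Hd.
Qed.

Lemma tt_no_conclusions {g d : vset} :
  (forall y, ~ d y) -> tt g d -> ~ (forall x, g x -> D2 x).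
Proof. intros Hd H Hg. destruct (H Hg) as [y [Hy _]]. exact (Hd y Hy). Qed.

Section Consequence.

Context {Atom : Type} {Conn : nat -> Type} {I : truth_funs Conn}.
Context {S : (Atom -> V3) -> Prop}.

Lemma cons_refl (G D : form Atom Conn -> Prop) (B : form Atom Conn) :
  G B -> D B -> cons I S G D.
Proof.
  intros HG HD v _.
  split; intros Hdes; exists (eval I v B);
    (split; [exists B; auto | apply Hdes; exists B; auto]).
Qed.

Lemma img_nil (v : Atom -> V3) (x : V3) :
  ~ img I v (fun _ : form Atom Conn => False) x.
Proof. intros [B [[] _]]. Qed.

Lemma atomic_expressive_attains (x : V3) :
  atomic_expressive I S -> exists A v, S v /\ eval I v A = x.
Proof.
  intros Hae. destruct (Hae (fun y => y = x)) as [G [v [Sv Himg]]].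
  destruct (proj2 (Himg x) eq_refl) as [A [_ HA]].
  exists A, v. auto.
Qed.

Section Gnegation.

Context {neg : form Atom Conn -> form Atom Conn} (neg_G : is_Gneg I S neg).

Lemma Gneg_excluded_middle (A : form Atom Conn) :
  cons I S (fun _ => False) (addf (fun C => C = neg A) A).
Proof.
  apply (proj1 (proj1 (neg_G _ _ A))).
  apply cons_refl with (neg A); unfold addf; auto.
Qed.

Lemma Gneg_explosion (A : form Atom Conn) :
  cons I S (addf (fun C => C = A) (neg A)) (fun _ => False).
Proof.
  apply (proj2 (proj1 (neg_G _ _ A))).
  apply cons_refl with A; unfold addf; auto.
Qed.

Lemma Gneg_value_one (A : form Atom Conn) {v : Atom -> V3} :
  S v -> eval I v (neg A) = v1 \/ eval I v A = v1.
Proof.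
  intros Sv.
  pose proof (proj1 (Gneg_excluded_middle A v Sv)) as Hss.
  apply ss_no_premises in Hss; [| apply img_nil].
  destruct Hss as [B [[HB | HB] HBv]]; subst B; auto.
Qed.

Lemma Gneg_not_both_designated (A : form Atom Conn) {v : Atom -> V3} :
  S v -> D2 (eval I v A) -> ~ D2 (eval I v (neg A)).
Proof.
  intros Sv HA HnA.
  apply (tt_no_conclusions (img_nil v) (proj2 (Gneg_explosion A v Sv))).
  intros x [B [[HB | HB] <-]]; subst B; assumption.
Qed.

End Gnegation.

End Consequence.

Theorem theorem4p3 (Atom : Type) (Conn : nat -> Type) (I : truth_funs Conn)
  (S : (Atom -> V3) -> Prop) :
  is_semantics S -> atomic_expressive I S ->
  forall c : Conn 1, ~ is_Gneg I S (app1 c).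
Proof.
  intros _ Hae c neg_G.
  destruct (atomic_expressive_attains vh Hae) as [A [v [Sv HA]]].
  assert (Hneg_one : eval I v (app1 c A) = v1).
  { destruct (Gneg_value_one neg_G A Sv) as [H | H]; congruence. }
  apply (Gneg_not_both_designated neg_G A Sv); unfold D2.
  - rewrite HA; auto.
  - rewrite Hneg_one; auto.
Qed.
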